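(* If $K$ is a compact subset of $\mathfrak S_1(\mathbb T)$, then $$\lim_{\varepsilon\to0}\sup_{S\in K}d\big(S(\varepsilon),\mathbf 1\big)=0.$$
   Context: Rigged sets: each point has a multiplicity in $\{0,1,\dots,\infty\}$; an enumeration lists each point according to its multiplicity. $\mathfrak S_1(\mathbb T)$ is the set of countable rigged subsets of the unit circle $\mathbb T$ (arc-length metric) in which $1$ has infinite multiplicity, with no other accumulation point and with $d(S,\mathbf 1)<\infty$, where $d(S,T)=\inf\sum_j\mathrm{dist}(s_j,t_j)$ over enumerations and $\mathbf 1$ is $1$ with infinite multiplicity. For $S\in\mathfrak S_1(\mathbb T)$ and $\varepsilon>0$, $S(\varepsilon)$ is the rigged set of points of $S$ (with their multiplicities) at distance less than $\varepsilon$ from $1$. *)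

From HB Require Import structures.
From mathcomp Require Import all_boot all_order all_algebra.
From mathcomp Require Import all_classical all_reals all_analysis.
Set Implicit Arguments. Unset Strict Implicit. Unset Printing Implicit Defensive.
Import Order.TTheory GRing.Theory Num.Theory.
Import numFieldNormedType.Exports.
Local Open Scope classical_set_scope.
Local Open Scope ring_scope.
Local Open Scope card_scope.

Section RiggedCircle.
Variable R : realType.

(* The unit circle T, a point e^{i x} represented by its angle x in (-pi, pi];
   the point 1 corresponds to the angle 0. *)
Definition circ := {x : R | (- pi < x) && (x <= pi)}.

Definition arcdist (x y : circ) : R :=
  Num.min `|sval x - sval y| (2 * pi - `|sval x - sval y|).

Lemma circ1_proof : (- (pi : R) < 0) && (0 <= (pi : R)).
Proof. by rewrite oppr_lt0 pi_gt0 ltW // pi_gt0. Qed.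

Definition circ1 : circ := exist _ 0 circ1_proof.

(* A rigged subset of T: a multiplicity in {0,1,...,oo} for each point;
   [None] stands for infinite multiplicity. *)
Definition rigged := circ -> option nat.

Definition support (S : rigged) : set circ := [set x | S x != Some 0%N].

Definition lists_with_mult (s : nat -> circ) (x : circ) (m : option nat) : Prop :=
  match m with
  | Some n => [set j | s j = x] #= `I_n
  | None => infinite_set [set j | s j = x]
  end.

Definition enumeration (S : rigged) (s : nat -> circ) : Prop :=
  forall x, lists_with_mult s x (S x).

Definition rdist (S T : rigged) : \bar R :=
  ereal_inf [set r | exists s t, enumeration S s /\ enumeration T t /\
                     r = (\sum_(0 <= j <oo) (arcdist (s j) (t j))%:E)%E].

Definition one_rig : rigged := fun x => if x == circ1 then None else Some 0%N.

Definition acc_pt (A : set circ) (x : circ) : Prop :=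
  forall r : R, 0 < r -> exists y, A y /\ y <> x /\ arcdist x y < r.

Definition S1 (S : rigged) : Prop :=
  [/\ countable (support S),
      S circ1 = None,
      (forall x, x <> circ1 -> S x <> None /\ ~ acc_pt (support S) x) &
      (rdist S one_rig < +oo)%E].

Definition restr (S : rigged) (eps : R) : rigged :=
  fun x => if arcdist x circ1 < eps then S x else Some 0%N.

Definition S1_open (U : set rigged) : Prop :=
  forall S, S1 S -> U S ->
    exists2 r : R, 0 < r & forall T, S1 T -> (rdist S T < r%:E)%E -> U T.

Definition S1_compact (K : set rigged) : Prop :=
  K `<=` S1 /\
  forall (I : Type) (U : I -> set rigged),
    (forall i, S1_open (U i)) -> K `<=` \bigcup_i U i ->
    exists2 F : set I, finite_set F & K `<=` \bigcup_(i in F) U i.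

End RiggedCircle.

From HB Require Import structures.
From mathcomp Require Import all_boot all_order all_algebra.
From mathcomp Require Import all_classical all_reals all_analysis.
From mathcomp Require Import lra.
Import Order.TTheory GRing.Theory Num.Theory.
Local Open Scope classical_set_scope.
Local Open Scope ring_scope.

(* For an enumeration t of S, the "local mass" m_r(t) = sum of dist(t_j, 1)
   over the t_j within distance r of 1 bounds d(S(eps), 1) for eps <= r (pair
   S(eps) with the constant enumeration of 1).  For fixed e the sets
   U_n = {T | m_r(t) < e for some enumeration t of T and some r > 1/(n+1)}
   are open, since m is Lipschitz-like under moving the points and shrinking r
   a little; they increase with n and cover S_1(T), because d(S, 1) < oo makes
   the tail of the series small and a small enough radius avoids the finitely
   many remaining points.  Compactness gives K in a single U_N, so
   delta = 1/(N+1) works. *)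

Set Implicit Arguments. Unset Strict Implicit.

Lemma arc_min_triangle (R : realFieldType) (p a b c : R) :
  0 < p -> - p < a <= p -> - p < b <= p -> - p < c <= p ->
  Num.min `|a - c| (2 * p - `|a - c|) <=
  Num.min `|a - b| (2 * p - `|a - b|) + Num.min `|b - c| (2 * p - `|b - c|).
Proof.
move=> p0 /andP[a1 a2] /andP[b1 b2] /andP[c1 c2]; rewrite !minEle.
case: (leP `|a - c| _) => q1; case: (leP `|a - b| _) => q2;
  case: (leP `|b - c| _) => q3; move: q1 q2 q3;
  case: (ger0P (a - c)) => h1; case: (ger0P (a - b)) => h2;
  case: (ger0P (b - c)) => h3; move=> *; lra.
Qed.

Section ArcDistance.
Variable R : realType.
Implicit Types x y z : circ R.

Lemma circ_bounds x : - pi < sval x <= pi.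
Proof. by case: x. Qed.

Lemma arcdist_triangle x y z : arcdist x z <= arcdist x y + arcdist y z.
Proof.
exact: arc_min_triangle (@pi_gt0 R) (circ_bounds x) (circ_bounds y) (circ_bounds z).
Qed.

Lemma arcdistC x y : arcdist x y = arcdist y x.
Proof. by rewrite /arcdist distrC. Qed.

Lemma arcdist_ge0 x y : 0 <= arcdist x y.
Proof.
have /andP[x1 x2] := circ_bounds x; have /andP[y1 y2] := circ_bounds y.
rewrite /arcdist minEle; case: ifP => _; first exact: normr_ge0.
case: (ger0P (sval x - sval y)) => _; lra.
Qed.

Lemma arcdistxx x : arcdist x x = 0.
Proof.
rewrite /arcdist subrr normr0 subr0 minEle.
by have := @pi_gt0 R; case: ifP => // /negbT; rewrite -ltNge => ? ?; lra.
Qed.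

End ArcDistance.

Section Enumerations.
Variable R : realType.
Implicit Types (S : rigged R) (s : nat -> circ R).

Lemma enumeration_fiber_card_eq S s s' x : enumeration S s -> enumeration S s' ->
  ([set j | s' j = x] #= [set j | s j = x])%card.
Proof.
move=> /(_ x) + /(_ x); rewrite /lists_with_mult; case: (S x) => [n|] h h'.
  by apply: card_eq_trans h' _; rewrite card_eq_sym.
have cnt (A : set nat) : countable A by apply: subset_card_le.
apply: card_eq_trans (eq_card_nat (cnt _) h') _.
by rewrite card_eq_sym; apply: eq_card_nat.
Qed.

Lemma enumeration_realign S s s' : enumeration S s -> enumeration S s' ->
  exists2 f : nat -> nat, set_bij setT setT f & forall j, s (f j) = s' j.
Proof.
move=> es es'.
have /choice[F fiberF] : forall x, exists f : nat -> nat,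
    set_bij [set j | s' j = x] [set j | s j = x] f.
  by move=> x; apply/card_set_bijP; apply: enumeration_fiber_card_eq es es'.
have FE j : s (F (s' j) j) = s' j by have [+ _ _] := fiberF (s' j); apply.
exists (fun j => F (s' j) j) => //; split=> //.
- move=> i j _ _ /= Fij; have := FE i; rewrite Fij FE => sji.
  rewrite sji in Fij; have [_ + _] := fiberF (s' i).
  by apply; rewrite // inE.
- move=> m _; have [_ _ /(_ m erefl) [j /= sj <-]] := fiberF (s m).
  by exists j; rewrite // sj.
Qed.

Lemma nneseries_enumeration_eq S s s' (g : circ R -> R) :
  (forall x, 0 <= g x) -> enumeration S s -> enumeration S s' ->
  (\sum_(j <oo) (g (s j))%:E = \sum_(j <oo) (g (s' j))%:E)%E.
Proof.
move=> g0 es es'; have [f fbij fE] := enumeration_realign es es'.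
rewrite !nneseries_esumT; last 2 first.
- by move=> n; rewrite lee_fin.
- by move=> n; rewrite lee_fin.
rewrite (@reindex_esum R _ _ setT setT f (fun j => (g (s j))%:E) fbij).
by congr esum; apply/funext => j; rewrite /= fE.
Qed.

End Enumerations.

Lemma nneseries_tail_lt (R : realType) (a : nat -> R) (e : R) : 0 < e ->
  (forall j, 0 <= a j) -> (\sum_(j <oo) (a j)%:E < +oo)%E ->
  exists n, (\sum_(n <= j <oo) (a j)%:E < e%:E)%E.
Proof.
move=> e0 a0 fin.
have tail0 := nneseries_tail_cvg fin (fun k _ => a0 k : (0 <= (a k)%:E)%E).
have [N _ small] := tail0 _ (open_ereal_lt' (e0 : (0 < e%:E)%E)).
exists N; exact: (small N (leqnn N)).
Qed.

Section LocalMass.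
Variable R : realType.
Implicit Types (x y : circ R) (s t : nat -> circ R).

Definition dist1 x := arcdist x (circ1 R).

Definition cutoff_dist1 (r : R) x := if dist1 x < r then dist1 x else 0.

Definition local_mass t (r : R) : \bar R :=
  (\sum_(j <oo) (cutoff_dist1 r (t j))%:E)%E.

Lemma dist1_ge0 x : 0 <= dist1 x.
Proof. exact: arcdist_ge0. Qed.

Lemma cutoff_dist1_ge0 r x : 0 <= cutoff_dist1 r x.
Proof. by rewrite /cutoff_dist1; case: ifP => // _; exact: dist1_ge0. Qed.

Lemma cutoff_dist1_le r x : cutoff_dist1 r x <= dist1 x.
Proof. by rewrite /cutoff_dist1; case: ifP => // _; exact: dist1_ge0. Qed.

Lemma cutoff_dist1_homo x : {homo cutoff_dist1^~ x : r r' / r <= r'}.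
Proof.
move=> r r' le_rr'; rewrite /cutoff_dist1; case: ifP => xr.
  by rewrite (lt_le_trans xr le_rr').
by case: ifP => _ //; exact: dist1_ge0.
Qed.

Lemma local_mass_ge0 t r : (0 <= local_mass t r)%E.
Proof. by apply: nneseries_ge0 => i _ _; rewrite lee_fin cutoff_dist1_ge0. Qed.

(* If x is within r of 1 but y is not within r + eta, then arcdist x y >= eta,
   so dist1 x < r <= (r / eta) * arcdist x y. *)
Lemma cutoff_dist1_shift (r eta : R) x y : 0 < eta -> 0 <= r ->
  cutoff_dist1 r x <= (1 + r / eta) * arcdist x y + cutoff_dist1 (r + eta) y.
Proof.
move=> eta0 r0.
have dxy0 := arcdist_ge0 x y; have k0 : 0 <= r / eta by rewrite divr_ge0 // ltW.
have cy0 := cutoff_dist1_ge0 (r + eta) y.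
rewrite /cutoff_dist1; case: (ltP (dist1 x) r) => xr; last first.
  by apply: addr_ge0 => //; apply: mulr_ge0 => //; lra.
have tx : dist1 x <= arcdist x y + dist1 y by apply: arcdist_triangle.
have ty : dist1 y <= arcdist x y + dist1 x by rewrite arcdistC; apply: arcdist_triangle.
have kE : r / eta * eta = r by rewrite divfK // gt_eqF.
by case: (ltP (dist1 y) (r + eta)) => yr; nra.
Qed.

Lemma local_mass_shift (r eta : R) s t : 0 < eta -> 0 <= r ->
  (local_mass s r <= (1 + r / eta)%:E * (\sum_(j <oo) (arcdist (s j) (t j))%:E)
                     + local_mass t (r + eta))%E.
Proof.
move=> eta0 r0; have k0 : 0 <= 1 + r / eta by rewrite addr_ge0 // divr_ge0 // ltW.
rewrite /local_mass -nneseriesZl; last by move=> i _; rewrite lee_fin arcdist_ge0.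
rewrite -nneseriesD; last 2 first.
- by move=> i _ _; rewrite -EFinM lee_fin mulr_ge0 // arcdist_ge0.
- by move=> i _ _; rewrite lee_fin cutoff_dist1_ge0.
apply: lee_nneseries; first by move=> i _ _; rewrite lee_fin cutoff_dist1_ge0.
by move=> n _; rewrite -EFinM -EFinD lee_fin cutoff_dist1_shift.
Qed.

Lemma cutoff_dist1_vanish_prefix s n : exists2 r : R, 0 < r &
  forall j, (j < n)%N -> cutoff_dist1 r (s j) = 0.
Proof.
elim: n => [|n [r r0 IH]]; first by exists 1.
exists (Num.min r (if 0 < dist1 (s n) then dist1 (s n) else 1)).
  by rewrite lt_min r0 /=; case: ifPn.
move=> j; rewrite ltnS leq_eqVlt => /orP[/eqP ->|jn]; last first.
  apply/eqP; rewrite eq_le cutoff_dist1_ge0 andbT -(IH j jn).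
  by apply: cutoff_dist1_homo; rewrite ge_min lexx.
have := dist1_ge0 (s n); rewrite le_eqVlt => /orP[/eqP sn0|sn0].
  by apply/eqP; rewrite eq_le cutoff_dist1_ge0 andbT sn0 cutoff_dist1_le.
by rewrite /cutoff_dist1 sn0 /= ltNge ge_min lexx orbT.
Qed.

End LocalMass.

Section Restriction.
Variable R : realType.

Lemma enumeration_one_rig : enumeration (@one_rig R) (fun _ => circ1 R).
Proof.
move=> x; rewrite /lists_with_mult /one_rig; case: eqP => [->|ne].
  by rewrite (_ : [set j : nat | _] = setT); [exact: infinite_nat|apply/seteqP].
by rewrite II0 card_eq0; apply/eqP/seteqP; split => j //= /esym.
Qed.

Lemma one_rig_enumeration_eq1 t : enumeration (@one_rig R) t -> t =1 fun=> circ1 R.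
Proof.
move=> et j; apply/eqP; apply: contraT => ne.
have := et (t j); rewrite /lists_with_mult /one_rig (negbTE ne) II0 card_eq0.
by move=> /eqP tj0; have : [set i | t i = t j] j by []; rewrite tj0.
Qed.

(* Redirecting points to 1 does not change its multiplicity, which is already
   infinite in S. *)
Lemma enumeration_restr (S : rigged R) s eps : 0 < eps -> S (circ1 R) = None ->
  enumeration S s ->
  enumeration (restr S eps) (fun j => if dist1 (s j) < eps then s j else circ1 R).
Proof.
move=> eps0 S1inf es x; rewrite /lists_with_mult /restr.
have d10 : dist1 (circ1 R) = 0 by rewrite /dist1 arcdistxx.
case: ifPn => xeps; last first.
  rewrite II0 card_eq0; apply/eqP/seteqP; split => j //=.
  case: ifPn => [sj|_] xE; rewrite -xE -/(dist1 _) in xeps.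
    by rewrite sj in xeps.
  by rewrite d10 eps0 in xeps.
have [->|ne] := eqVneq x (circ1 R).
  have := es (circ1 R); rewrite /lists_with_mult S1inf.
  by apply: sub_infinite_set => j /= ->; case: ifP.
rewrite (_ : [set j | _] = [set j | s j = x]); first exact: es.
apply/seteqP; split => j /=; first by case: ifP => // _ sj; rewrite sj eqxx in ne.
by move=> sj; rewrite sj -/(dist1 _) xeps.
Qed.

Lemma rdist_restr_le_local_mass (S : rigged R) s (eps r : R) :
  0 < eps -> eps <= r -> S (circ1 R) = None -> enumeration S s ->
  (rdist (restr S eps) (@one_rig R) <= local_mass s r)%E.
Proof.
move=> eps0 le_eps_r S1inf es.
apply: le_trans (ereal_inf_lbound _) _.
  by do 2 eexists; split; [exact: enumeration_restr|split; [exact: enumeration_one_rig|]].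
apply: lee_nneseries; first by move=> k _ _; rewrite lee_fin arcdist_ge0.
move=> k _; rewrite lee_fin; case: ifPn => sk; last by rewrite arcdistxx cutoff_dist1_ge0.
by rewrite /cutoff_dist1 (lt_le_trans sk le_eps_r).
Qed.

End Restriction.

Section MassNeighbourhoods.
Variable R : realType.

Definition mass_radius (n : nat) : R := n.+1%:R^-1.

Definition mass_nbhd (e : R) (n : nat) : set (rigged R) :=
  [set T | exists t, enumeration T t /\
     exists2 r, mass_radius n < r & (local_mass t r < e%:E)%E].

Lemma mass_radius_gt0 n : 0 < mass_radius n.
Proof. by rewrite invr_gt0 ltr0n. Qed.

Lemma mass_nbhd_homo e : {homo mass_nbhd e : m n / (m <= n)%N >-> m `<=` n}.
Proof.
move=> m n mn T [t [et [r mr tr]]]; exists t; split => //; exists r => //.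
by apply: le_lt_trans mr; rewrite lef_pV2 ?posrE ?ltr0n // ler_nat ltnS.
Qed.

(* Shrink the radius from r to r - eta, with eta half the slack above 1/(n+1);
   local_mass_shift then controls the new mass by a multiple of d(T, T'). *)
Lemma mass_nbhd_open e n : S1_open (mass_nbhd e n).
Proof.
move=> T _ [t0 [et0 [r nr t0r]]].
have n0 := mass_radius_gt0 n.
set eta := (r - mass_radius n) / 2; have eta0 : 0 < eta by rewrite /eta; lra.
have [c c0 t0E] : exists2 c, 0 <= c & local_mass t0 r = c%:E.
  have mfin : local_mass t0 r \is a fin_num.
    by rewrite ge0_fin_numE ?local_mass_ge0 // (lt_trans t0r) ?ltry.
  by exists (fine (local_mass t0 r)); rewrite ?fineK // -lee_fin fineK ?local_mass_ge0.
have ce : c < e by rewrite -lte_fin -t0E.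
have r0 : 0 <= r - eta by rewrite /eta; lra.
set k := 1 + (r - eta) / eta.
have k0 : 0 < k by rewrite /k ltr_wpDr // divr_ge0 // ltW.
exists ((e - c) / k); first by rewrite divr_gt0 // subr_gt0.
move=> T' _ /ereal_inf_lt [_ [t [t' [et [et' ->]]]] Dlt].
exists t'; split => //; exists (r - eta); first by rewrite /eta; lra.
have := local_mass_shift t' t eta0 r0; rewrite subrK.
have -> : local_mass t r = local_mass t0 r.
  exact: nneseries_enumeration_eq (cutoff_dist1_ge0 r) et et0.
rewrite t0E (eq_eseriesr (fun j _ => congr1 EFin (arcdistC (t' j) (t j)))).
set D := (\sum_(j <oo) _)%E in Dlt *.
have Dfin : D \is a fin_num.
  rewrite ge0_fin_numE ?(lt_trans Dlt) ?ltry //.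
  by apply: nneseries_ge0 => i _ _; rewrite lee_fin arcdist_ge0.
rewrite -(fineK Dfin) lte_fin ltr_pdivlMr // in Dlt *.
by move=> /le_lt_trans; apply; rewrite -EFinM -EFinD lte_fin -/k (mulrC k); lra.
Qed.

(* The only enumeration of 1 is constant, so d(S, 1) < oo makes the series of
   dist1 along some enumeration of S converge. *)
Lemma S1_in_mass_nbhd e S : 0 < e -> S1 S -> exists n, mass_nbhd e n S.
Proof.
move=> e0 [_ _ _ /ereal_inf_lt [_ [s [u [es [eu ->]]]] su_fin]].
have s_fin : (\sum_(j <oo) (dist1 (s j))%:E < +oo)%E.
  apply: le_lt_trans su_fin; apply: lee_nneseries => [j _ _|j _]; rewrite lee_fin.
    exact: dist1_ge0.
  by rewrite /dist1 (one_rig_enumeration_eq1 eu).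
have [n tail_lt] := nneseries_tail_lt e0 (fun j => dist1_ge0 (s j)) s_fin.
have [r r0 prefix0] := cutoff_dist1_vanish_prefix s n.
have mass_lt : (local_mass s r < e%:E)%E.
  rewrite /local_mass (nneseries_split 0 n); last first.
    by move=> k _; rewrite lee_fin cutoff_dist1_ge0.
  rewrite add0n big1_seq ?add0e; last first.
    by move=> k; rewrite mem_index_iota => /andP[_ kn]; rewrite prefix0.
  apply: le_lt_trans tail_lt; apply: lee_nneseries.
    by move=> k _ _; rewrite lee_fin cutoff_dist1_ge0.
  by move=> k _; rewrite lee_fin cutoff_dist1_le.
exists (Num.truncn r^-1), s; split => //; exists r => //.
by rewrite /mass_radius invf_plt ?posrE ?ltr0n // truncnS_gt.
Qed.

Lemma compact_sub_mass_nbhd (K : set (rigged R)) e :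
  S1_compact K -> 0 < e -> exists N, K `<=` mass_nbhd e N.
Proof.
move=> [KS1 Kcpt] e0.
have [F finF KF] : exists2 F : set nat,
    finite_set F & K `<=` \bigcup_(n in F) mass_nbhd e n.
  apply: Kcpt; first by move=> n; exact: mass_nbhd_open.
  by move=> S /KS1 /(S1_in_mass_nbhd e0) [n Sn]; exists n.
exists (\max_(i <- finmap.enum_fset (fset_set F)) i)%N => S /KF [n Fn].
apply: mass_nbhd_homo; apply: leq_bigmax_seq => //.
by rewrite in_fset_set // mem_set.
Qed.

End MassNeighbourhoods.

Theorem mainTheorem14 (R : realType) (K : set (rigged R)) :
  S1_compact K ->
  forall e : R, 0 < e ->
    exists2 delta : R, 0 < delta &
      forall eps : R, 0 < eps -> eps < delta ->
        (ereal_sup [set rdist (restr S eps) (@one_rig R) | S in K] <= e%:E)%E.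
Proof.
move=> Kcpt e e0; have [N KN] := compact_sub_mass_nbhd Kcpt e0.
exists (mass_radius R N); first exact: mass_radius_gt0.
move=> eps eps0 epsN; apply: ge_ereal_sup => _ [S KS <-].
have [s [es [r Nr sr]]] := KN S KS.
have [_ S1inf _ _] := Kcpt.1 S KS.
apply/ltW/le_lt_trans/sr; apply: rdist_restr_le_local_mass => //.
exact/ltW/(lt_trans epsN).
Qed.
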